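(* Let $k\ge2$ be an integer, and let $G$ be a graph whose anticonnected components have size less than $|G|/k$. Then there is a complete $(k,|G|/k^2)$-blockade in $G$.
   Context: Graphs are finite and simple; $|G|$ is the number of vertices of $G$ and $\overline G$ its complement. $G$ is anticonnected if $\overline G$ is connected; an induced subgraph $F$ of $G$ is an anticonnected component of $G$ if $\overline F$ is a connected component of $\overline G$. A blockade in $G$ is a sequence $(B_1,\ldots,B_m)$ of disjoint subsets of $V(G)$, with length $m$ and width $\min_i|B_i|$; a $(k,w)$-blockade has length at least $k$ and width at least $w$. A blockade is complete in $G$ if for all distinct $i,j$, every vertex of $B_i$ is adjacent to every vertex of $B_j$. *)

From mathcomp Require Import all_boot.
Set Implicit Arguments. Unset Strict Implicit. Unset Printing Implicit Defensive.

Definition simple_graph (T : finType) (e : rel T) : Prop :=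
  symmetric e /\ irreflexive e.

Definition compl_rel (T : finType) (e : rel T) : rel T :=
  fun x y => (x != y) && ~~ e x y.

Definition anticomponent (T : finType) (e : rel T) (x : T) : {set T} :=
  [set y | connect (compl_rel e) x y].

Definition blockade (T : finType) (m : nat) (B : 'I_m -> {set T}) : Prop :=
  forall i j : 'I_m, i != j -> [disjoint B i & B j].

Definition complete_blockade (T : finType) (e : rel T) (m : nat)
    (B : 'I_m -> {set T}) : Prop :=
  forall i j : 'I_m, i != j -> forall x y, x \in B i -> y \in B j -> e x y.

(* Call a vertex set closed if it is a union of anticomponents. Between disjoint
   closed sets there are no non-edges, so disjoint closed sets form a complete
   blockade. Each anticomponent has fewer than n/k vertices, so greedily deleting
   anticomponents from a closed set of size at least n/k^2 leaves a closed set of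
   size between n/k^2 and n/k^2 + n/k. Choosing such sets one after another in
   the complement of those already chosen, k - 1 of them use at most
   (k-1)(n/k^2 + n/k) = n - n/k^2 vertices, so there is room for a k-th one. *)

From mathcomp Require Import all_boot zify.
Set Implicit Arguments.
Unset Strict Implicit.
Unset Printing Implicit Defensive.

Lemma card_bigcup_seq_leq (T : finType) (d b : nat) (s : seq {set T}) :
  (forall A, A \in s -> d * #|A| <= b) ->
  d * #|\bigcup_(A <- s) A| <= size s * b.
Proof.
elim: s => [|A s IHs] sAs; first by rewrite big_nil cards0 muln0.
rewrite big_cons mulSn (leq_trans _ (leq_add (sAs A (mem_head A s)) (IHs _))) //.
  by rewrite -mulnDr leq_mul2l (leq_card_setU A _) orbT.
by move=> B Bs; apply: sAs; rewrite inE Bs orbT.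
Qed.

Section ClosedSets.

Variables (T : finType) (r : rel T).
Hypothesis sym_r : connect_sym r.

Lemma closedD_component (U : {set T}) x :
  closed r U -> closed r (U :\: [set y | connect r x y]).
Proof.
move=> clU y z ryz; move: (connect_closed sym_r x ryz).
by rewrite !inE (clU y z ryz) => ->.
Qed.

Lemma component_subset (U : {set T}) x :
  closed r U -> x \in U -> [set y | connect r x y] \subset U.
Proof.
by move=> clU xU; apply/subsetP => y; rewrite inE => /(closed_connect clU) <-.
Qed.

Variables (d t c : nat).
Hypothesis component_small : forall x, d * #|[set y | connect r x y]| <= c.

Lemma closed_subset_between (U : {set T}) :
  closed r U -> t <= d * #|U| ->
  exists2 B : {set T}, closed r B &
    [/\ B \subset U, t <= d * #|B| & d * #|B| <= t + c].
Proof.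
have [n] := ubnP #|U|; elim: n U => // n IHn U /ltnSE-cardU clU tU.
have [U0 | [x xU]] := set_0Vmem U.
  by exists U => //; split; rewrite // U0 cards0 muln0.
set C := [set y | connect r x y].
have CU : C \subset U := component_subset clU xU.
have C_gt0 : 0 < #|C| by apply/card_gt0P; exists x; rewrite inE.
have cardUC : #|U| = #|C| + #|U :\: C| by rewrite -(cardsID C U) (setIidPr CU).
have [tUC | UCt] := leqP t (d * #|U :\: C|).
  have cardUC_lt : #|U :\: C| < n by lia.
  have [B clB [BUC tB Bc]] := IHn _ cardUC_lt (closedD_component x clU) tUC.
  by exists B => //; split => //; apply: subset_trans BUC (subsetDl U C).
exists U => //; split => //.
(* Removing [C] would drop below [t], and [C] weighs at most [c]. *)
by move: (component_small x) UCt; rewrite -/C cardUC mulnDr; lia.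
Qed.

Lemma closed_packing j : j.-1 * (t + c) + t <= d * #|T| ->
  exists s : seq {set T}, [/\ size s = j,
    pairwise (fun A B : {set T} => [disjoint A & B]) s &
    forall B, B \in s -> [/\ closed r B, t <= d * #|B| & d * #|B| <= t + c]].
Proof.
elim: j => [|j IHj] budget; first by exists [::].
have [|s [size_s disj_s blocks_s]] := IHj.
  by apply: leq_trans budget; rewrite leq_add2r leq_mul2r leq_pred orbT.
pose W : {set T} := \bigcup_(A <- s) A.
have clW : closed r W.
  rewrite /W big_seq; apply: (big_ind (fun W : {set T} => closed r W)).
  - by move=> y z _; rewrite !inE.
  - by move=> A B clA clB y z ryz; rewrite !inE (clA y z ryz) (clB y z ryz).
  - by move=> A /blocks_s[].
have clCW : closed r (~: W) by move=> y z ryz; rewrite !inE (clW y z ryz).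
have dW : d * #|W| <= j * (t + c).
  by rewrite -size_s card_bigcup_seq_leq // => A /blocks_s[].
have tCW : t <= d * #|~: W|.
  by move: budget dW => /=; rewrite -(cardsC W) mulnDr; lia.
have [B clB [BCW tB Bc]] := closed_subset_between clCW tCW.
exists (B :: s); split; first by rewrite /= size_s.
  rewrite /= disj_s andbT; apply/allP => A As.
  rewrite disjoint_sym; apply: disjointWr BCW _.
  by rewrite disjoints_subset setCK /W bigcup_seq; apply: bigcup_sup.
by move=> A; rewrite inE => /predU1P[->|/blocks_s].
Qed.

End ClosedSets.

Lemma compl_rel_sym (T : finType) (e : rel T) :
  symmetric e -> symmetric (compl_rel e).
Proof. by move=> sym_e x y; rewrite /compl_rel eq_sym sym_e. Qed.

Lemma blockade_nth (T : finType) (s : seq {set T}) :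
  pairwise (fun A B : {set T} => [disjoint A & B]) s ->
  blockade (fun i : 'I_(size s) => nth set0 s i).
Proof.
move=> /(pairwiseP set0) disj_s i j; rewrite neq_ltn => /orP[ij|ji].
  exact: disj_s (ltn_ord i) (ltn_ord j) ij.
by rewrite disjoint_sym; apply: disj_s (ltn_ord j) (ltn_ord i) ji.
Qed.

Lemma complete_blockade_closed (T : finType) (e : rel T) m (B : 'I_m -> {set T}) :
  blockade B -> (forall i, closed (compl_rel e) (B i)) -> complete_blockade e B.
Proof.
move=> disjB clB i j ij x y xi yj.
have yNi : y \notin B i by rewrite (disjointFl (disjB i j ij) yj).
have xy : x != y by apply: contraNneq yNi => <-.
apply: contraNT yNi => Nexy.
by rewrite -(clB i x y) // /compl_rel xy.
Qed.

Theorem lemma4p1 (T : finType) (e : rel T) (k : nat) :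
  simple_graph e -> 2 <= k ->
  (forall x : T, k * #|anticomponent e x| < #|T|) ->
  exists (m : nat) (B : 'I_m -> {set T}),
    [/\ k <= m, blockade B, complete_blockade e B &
        forall i : 'I_m, #|T| <= k ^ 2 * #|B i| ].
Proof.
move=> [sym_e _] k_ge2 small.
have sym_r := sym_connect_sym (compl_rel_sym sym_e).
have component_small x : k ^ 2 * #|anticomponent e x| <= k * #|T|.
  by rewrite -mulnn -mulnA leq_mul2l ltnW ?orbT.
have budget : k.-1 * (#|T| + k * #|T|) + #|T| <= k ^ 2 * #|T|.
  by case: k {small component_small} k_ge2 => // k _; nia.
have [s [size_s disj_s blocks_s]] := closed_packing sym_r component_small budget.
have block_i (i : 'I_(size s)) := blocks_s _ (mem_nth set0 (ltn_ord i)).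
exists (size s), (fun i => nth set0 s i); split.
- by rewrite size_s.
- exact: blockade_nth.
- by apply: complete_blockade_closed (blockade_nth disj_s) _ => i; case: (block_i i).
- by move=> i; case: (block_i i).
Qed.
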